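(* Let $(\vdash,\overline{\cdot},\widehat{\cdot})$ be a setting satisfying Pre-Relevance, and let $\mathcal{S},\mathcal{S}'\subseteq\mathcal{L}$ with $\mathcal{S}\mid\mathcal{S}'$. If $\mathcal{E}$ is a complete extension of $\mathcal{AF}_{\vdash}(\mathcal{S})$ and $\mathcal{E}'$ is a complete extension of $\mathcal{AF}_{\vdash}(\mathcal{S}')$, then $\mathcal{E}\cup\mathcal{E}'$ is an admissible set of $\mathcal{AF}_{\vdash}(\mathcal{S}\cup\mathcal{S}')$.
   Context: $\mathcal{L}$ is the set of formulas of a language built from propositional atoms; $\mathsf{Atoms}(\mathcal{S})$ is the set of atoms occurring in $\mathcal{S}$, and $\mathcal{S}_1\mid\mathcal{S}_2$ means $\mathsf{Atoms}(\mathcal{S}_1)\cap\mathsf{Atoms}(\mathcal{S}_2)=\emptyset$. A setting is $(\vdash,\overline{\cdot},\widehat{\cdot})$ with ${\vdash}\subseteq\wp_{\sf fin}(\mathcal{L})\times\mathcal{L}$ arbitrary, $\overline{\cdot}:\mathcal{L}\to\wp(\mathcal{L})$, $\widehat{\cdot}$ assigning to each nonempty finite set a finite set of formulas, with $\widehat{\emptyset}=\emptyset$. $\mathit{Arg}_{\vdash}(\mathcal{S})=\{(\Gamma,\gamma):\Gamma\subseteq\mathcal{S}\text{ finite},\Gamma\vdash\gamma\}$; $\mathcal{AF}_{\vdash}(\mathcal{S})$ is the attack graph on it where $(\Gamma,\gamma)$ attacks $(\Gamma',\gamma')$ iff $\gamma\in\overline{\phi}$ for some $\phi\in\widehat{\Gamma'}$.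 Admissible = conflict-free and every attacker (in the framework) of a member is attacked by a member; complete = admissible and contains every argument it defends. Pre-Relevance of the setting: (a) for all $\mathcal{S}_1,\mathcal{S}_2,\phi$ with $\mathcal{S}_1\cup\{\phi\}\mid\mathcal{S}_2$, $\mathcal{S}_1\cup\mathcal{S}_2\vdash\phi$ implies $\mathcal{S}_1'\vdash\phi$ for some $\mathcal{S}_1'\subseteq\mathcal{S}_1$; (b) primeness: for all sets of atoms $\mathcal{A}_1\mid\mathcal{A}_2$, all finite $\mathcal{S}_1,\mathcal{T}_1,\mathcal{S}_2,\mathcal{T}_2$ with $\mathsf{Atoms}(\mathcal{S}_i),\mathsf{Atoms}(\mathcal{T}_i)\subseteq\mathcal{A}_i$, and all $\phi,\psi$ with $\psi\in\overline{\phi}$, $\phi\in\widehat{\mathcal{T}_1\cup\mathcal{T}_2}$: if $\mathcal{S}_1\cup\mathcal{S}_2\vdash\psi$ then there are $i\in\{1,2\}$, $\mathcal{S}_i'\subseteq\mathcal{S}_i$, $\phi_i\in\widehat{\mathcal{T}_i}$, $\psi_i\in\overline{\phi_i}$ with $\mathcal{S}_i'\vdash\psi_i$; (c) $\widehat{\Delta}\subseteq\widehat{\Delta\cup\Delta'}$ for all finite $\Delta,\Delta'$. *)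

(* Abstract formula language: a type Form of formulas over a
   type Atom of propositional atoms, with atm phi a meaning "atom a occurs in phi". *)
From Stdlib Require Import List.

Definition finite {X : Type} (A : X -> Prop) : Prop :=
  exists l : list X, forall x, A x <-> In x l.

Definition subset {X : Type} (A B : X -> Prop) : Prop := forall x, A x -> B x.
Definition union {X : Type} (A B : X -> Prop) : X -> Prop := fun x => A x \/ B x.
Definition emptyset {X : Type} : X -> Prop := fun _ => False.
Definition single {X : Type} (a : X) : X -> Prop := fun x => x = a.

Definition Atoms {Form Atom : Type} (atm : Form -> Atom -> Prop)
  (S : Form -> Prop) : Atom -> Prop := fun a => exists x, S x /\ atm x a.

Definition atom_disjoint {Form Atom : Type} (atm : Form -> Atom -> Prop)
  (S1 S2 : Form -> Prop) : Prop :=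
  forall a, Atoms atm S1 a -> Atoms atm S2 a -> False.

(* A setting (|-, bar, hat): |- is an arbitrary relation between finite sets and
   formulas (only its values on finite sets matter); hat sends finite sets to
   finite sets and hat(emptyset) = emptyset. *)
Definition is_setting {Form : Type} (hat : (Form -> Prop) -> (Form -> Prop)) : Prop :=
  (forall D, finite D -> finite (hat D)) /\ (forall phi, ~ hat emptyset phi).

Definition pre_relevance {Form Atom : Type} (atm : Form -> Atom -> Prop)
  (derives : (Form -> Prop) -> Form -> Prop)
  (bar : Form -> (Form -> Prop))
  (hat : (Form -> Prop) -> (Form -> Prop)) : Prop :=
  (forall (S1 S2 : Form -> Prop) (phi : Form),
      finite S1 -> finite S2 ->
      atom_disjoint atm (union S1 (single phi)) S2 ->
      derives (union S1 S2) phi ->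
      exists S1', subset S1' S1 /\ derives S1' phi)
  /\
  (forall (A1 A2 : Atom -> Prop) (S1 T1 S2 T2 : Form -> Prop) (phi psi : Form),
      (forall a, A1 a -> A2 a -> False) ->
      finite S1 -> finite T1 -> finite S2 -> finite T2 ->
      subset (Atoms atm S1) A1 -> subset (Atoms atm T1) A1 ->
      subset (Atoms atm S2) A2 -> subset (Atoms atm T2) A2 ->
      bar phi psi -> hat (union T1 T2) phi ->
      derives (union S1 S2) psi ->
      (exists S1' phi1 psi1, subset S1' S1 /\ hat T1 phi1 /\ bar phi1 psi1
                             /\ derives S1' psi1)
      \/
      (exists S2' phi2 psi2, subset S2' S2 /\ hat T2 phi2 /\ bar phi2 psi2
                             /\ derives S2' psi2))
  /\
  (forall D D' : Form -> Prop, finite D -> finite D' ->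
      subset (hat D) (hat (union D D'))).

Definition argument (Form : Type) : Type := ((Form -> Prop) * Form)%type.

Definition in_Arg {Form : Type} (derives : (Form -> Prop) -> Form -> Prop)
  (S : Form -> Prop) (a : argument Form) : Prop :=
  finite (fst a) /\ subset (fst a) S /\ derives (fst a) (snd a).

Definition attacks {Form : Type} (bar : Form -> (Form -> Prop))
  (hat : (Form -> Prop) -> (Form -> Prop)) (a b : argument Form) : Prop :=
  exists phi, hat (fst b) phi /\ bar phi (snd a).

Definition defends {Form : Type} (derives : (Form -> Prop) -> Form -> Prop)
  (bar : Form -> (Form -> Prop)) (hat : (Form -> Prop) -> (Form -> Prop))
  (S : Form -> Prop) (E : argument Form -> Prop) (a : argument Form) : Prop :=
  forall b, in_Arg derives S b -> attacks bar hat b a ->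
    exists c, E c /\ attacks bar hat c b.

Definition conflict_free {Form : Type} (bar : Form -> (Form -> Prop))
  (hat : (Form -> Prop) -> (Form -> Prop)) (E : argument Form -> Prop) : Prop :=
  forall a b, E a -> E b -> ~ attacks bar hat a b.

Definition admissible {Form : Type} (derives : (Form -> Prop) -> Form -> Prop)
  (bar : Form -> (Form -> Prop)) (hat : (Form -> Prop) -> (Form -> Prop))
  (S : Form -> Prop) (E : argument Form -> Prop) : Prop :=
  subset E (in_Arg derives S) /\ conflict_free bar hat E /\
  (forall a, E a -> defends derives bar hat S E a).

Definition complete {Form : Type} (derives : (Form -> Prop) -> Form -> Prop)
  (bar : Form -> (Form -> Prop)) (hat : (Form -> Prop) -> (Form -> Prop))
  (S : Form -> Prop) (E : argument Form -> Prop) : Prop :=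
  admissible derives bar hat S E /\
  (forall a, in_Arg derives S a -> defends derives bar hat S E a -> E a).

(* Primeness (b), applied with an empty second hypothesis set, localizes attacks:
   if the premises of an argument use only atoms of one side of a partition, any
   attack on it can be traced back to the premises of the attacker on that same
   side.  An attack from S on a member of E' therefore localizes to an argument of
   AF(S') with no premises; E' would have to counter-attack it, which is
   impossible because the hat of the empty set is empty.  An attack from S u S'
   on a member of E localizes to an argument of AF(S); E counter-attacks that
   argument, and by (c) the same counter-attack hits the original attacker. *)
From Stdlib Require Import List Classical FunctionalExtensionality PropExtensionality.

Lemma set_ext {X : Type} (A B : X -> Prop) : (forall x, A x <-> B x) -> A = B.
Proof.
  intro H; apply functional_extensionality; intro x.
  apply propositional_extensionality; apply H.
Qed.

Lemma union_comm {X : Type} (A B : X -> Prop) : union A B = union B A.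
Proof. apply set_ext; unfold union; tauto. Qed.

Lemma union_emptyset_l {X : Type} (A : X -> Prop) : union emptyset A = A.
Proof. apply set_ext; unfold union, emptyset; tauto. Qed.

Lemma union_emptyset_r {X : Type} (A : X -> Prop) : union A emptyset = A.
Proof. apply set_ext; unfold union, emptyset; tauto. Qed.

Lemma union_subset_absorb {X : Type} (A B : X -> Prop) : subset A B -> union A B = B.
Proof. intro HAB; apply set_ext; intro x; unfold union; firstorder. Qed.

Lemma subset_emptyset {X : Type} (A : X -> Prop) : subset A emptyset -> A = emptyset.
Proof. intro HA; apply set_ext; intro x; split; [apply HA | intros []]. Qed.

Lemma finite_emptyset {X : Type} : finite (@emptyset X).
Proof. exists nil; simpl; unfold emptyset; tauto. Qed.

Lemma finite_subset {X : Type} (A B : X -> Prop) : finite A -> subset B A -> finite B.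
Proof.
  intros [l Hl] HBA.
  assert (Hfilter : exists l', forall x, (B x /\ In x l) <-> In x l').
  { clear Hl; induction l as [|y l [l' Hl']].
    - exists nil; simpl; tauto.
    - destruct (classic (B y)) as [By | nBy].
      + exists (y :: l'); intro x; simpl; rewrite <- Hl'.
        split; [intros [Bx [<- | Ix]] | intros [<- | [Bx Ix]]]; auto.
      + exists l'; intro x; simpl; rewrite <- Hl'.
        split; [intros [Bx [<- | Ix]] | intros [Bx Ix]]; tauto.
  }
  destruct Hfilter as [l' Hl']; exists l'; intro x; rewrite <- Hl', <- Hl.
  split; [auto | tauto].
Qed.

Lemma Atoms_subset {Form Atom : Type} (atm : Form -> Atom -> Prop) (A B : Form -> Prop) :
  subset A B -> subset (Atoms atm A) (Atoms atm B).
Proof. intros HAB a [x [Ax Hx]]; exists x; auto. Qed.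

Lemma Atoms_emptyset {Form Atom : Type} (atm : Form -> Atom -> Prop) (C : Atom -> Prop) :
  subset (Atoms atm emptyset) C.
Proof. intros a [x [[] _]]. Qed.

Lemma atom_disjoint_sym {Form Atom : Type} (atm : Form -> Atom -> Prop)
  (S S' : Form -> Prop) : atom_disjoint atm S S' -> atom_disjoint atm S' S.
Proof. intros Hdisj a H H'; exact (Hdisj a H' H). Qed.

Lemma in_Arg_subset {Form : Type} (derives : (Form -> Prop) -> Form -> Prop)
  (S T : Form -> Prop) (a : argument Form) :
  subset S T -> in_Arg derives S a -> in_Arg derives T a.
Proof. intros HST [Hf [HS Hd]]; split; [|split]; auto; intros x Hx; auto. Qed.

Section PreRelevantSetting.

Variables (Form Atom : Type) (atm : Form -> Atom -> Prop).
Variable derives : (Form -> Prop) -> Form -> Prop.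
Variable bar : Form -> (Form -> Prop).
Variable hat : (Form -> Prop) -> (Form -> Prop).
Hypothesis setting_hat : is_setting hat.
Hypothesis relevance : pre_relevance atm derives bar hat.

Lemma hat_subset (D D' : Form -> Prop) :
  finite D' -> subset D D' -> subset (hat D) (hat D').
Proof.
  intros HD' HDD'.
  rewrite <- (union_subset_absorb D D' HDD').
  apply (proj2 (proj2 relevance)); [apply (finite_subset D') |]; assumption.
Qed.

Lemma not_attacks_emptyset (c : argument Form) (psi : Form) :
  ~ attacks bar hat c (emptyset, psi).
Proof. intros [phi [Hphi _]]; exact (proj2 setting_hat phi Hphi). Qed.

Lemma attacks_localize (A1 A2 : Atom -> Prop) (D1 D2 G : Form -> Prop) (d g : Form) :
  (forall a, A1 a -> A2 a -> False) ->
  finite D1 -> finite D2 -> finite G ->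
  subset (Atoms atm D1) A1 -> subset (Atoms atm D2) A2 -> subset (Atoms atm G) A1 ->
  derives (union D1 D2) d -> attacks bar hat (union D1 D2, d) (G, g) ->
  exists D1' d', subset D1' D1 /\ derives D1' d' /\ attacks bar hat (D1', d') (G, g).
Proof.
  intros HA HD1 HD2 HG HD1A HD2A HGA Hd [phi [Hphi Hbar]]; simpl in *.
  rewrite <- (union_emptyset_r G) in Hphi.
  destruct (proj1 (proj2 relevance) A1 A2 D1 G D2 emptyset phi d HA HD1 HG HD2
              finite_emptyset HD1A HGA HD2A (Atoms_emptyset atm A2) Hbar Hphi Hd)
    as [[D1' [phi1 [psi1 [HD1' [Hphi1 [Hpsi1 Hd1]]]]]] | [_ [phi2 [_ [_ [Hphi2 _]]]]]].
  - exists D1', psi1; repeat split; auto; exists phi1; auto.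
  - destruct (proj2 setting_hat phi2 Hphi2).
Qed.

Lemma admissible_not_attacked_across (S S' : Form -> Prop) (E' : argument Form -> Prop)
  (a b : argument Form) :
  atom_disjoint atm S S' -> admissible derives bar hat S' E' ->
  in_Arg derives S a -> E' b -> ~ attacks bar hat a b.
Proof.
  intros Hdisj [HE'arg [_ HE'def]] [Ha [HaS Hda]] Eb Hat.
  destruct a as [G g], b as [G' g']; simpl in *.
  destruct (HE'arg _ Eb) as [HG' [HG'S _]]; simpl in *.
  rewrite <- (union_emptyset_l G) in Hda, Hat.
  destruct (attacks_localize (Atoms atm S') (Atoms atm S) emptyset G G' g g'
              (atom_disjoint_sym atm S S' Hdisj) finite_emptyset Ha HG'
              (Atoms_emptyset atm _) (Atoms_subset atm _ _ HaS)
              (Atoms_subset atm _ _ HG'S) Hda Hat)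
    as [D [psi [HD [Hpsi Hat']]]].
  rewrite (subset_emptyset D HD) in Hpsi, Hat'.
  assert (Harg : in_Arg derives S' (emptyset, psi)).
  { split; [exact finite_emptyset | split; [intros _ [] | exact Hpsi]]. }
  destruct (HE'def _ Eb _ Harg Hat') as [c [_ Hc]].
  exact (not_attacks_emptyset c psi Hc).
Qed.

Lemma admissible_defends_in_union (S S' : Form -> Prop) (E : argument Form -> Prop)
  (a : argument Form) :
  atom_disjoint atm S S' -> admissible derives bar hat S E ->
  E a -> defends derives bar hat (union S S') E a.
Proof.
  intros Hdisj [HEarg [_ HEdef]] Ea [D d] [HD [HDS Hd]] Hat; simpl in *.
  destruct a as [G g].
  destruct (HEarg _ Ea) as [HG [HGS _]]; simpl in *.
  set (D1 := fun x => D x /\ S x).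
  set (D2 := fun x => D x /\ S' x).
  assert (HD1 : subset D1 D) by (intros x [? ?]; auto).
  assert (HD2 : subset D2 D) by (intros x [? ?]; auto).
  assert (Hsplit : union D1 D2 = D).
  { apply set_ext; intro x; unfold union, D1, D2.
    split; [tauto | intro Dx; destruct (HDS x Dx); tauto]. }
  rewrite <- Hsplit in Hd, Hat.
  destruct (attacks_localize (Atoms atm S) (Atoms atm S') D1 D2 G d g Hdisj
              (finite_subset D D1 HD HD1) (finite_subset D D2 HD HD2) HG
              (Atoms_subset atm _ _ (fun x (h : D1 x) => proj2 h))
              (Atoms_subset atm _ _ (fun x (h : D2 x) => proj2 h))
              (Atoms_subset atm _ _ HGS) Hd Hat)
    as [D' [psi [HD'1 [Hpsi Hat']]]].
  assert (HD' : subset D' D) by (intros x Hx; apply HD1, HD'1, Hx).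
  assert (Harg : in_Arg derives S (D', psi)).
  { split; [apply (finite_subset D) | split]; auto.
    intros x Hx; apply (HD'1 x Hx). }
  destruct (HEdef _ Ea _ Harg Hat') as [c [Ec [phi [Hphi Hbar]]]].
  exists c; split; [exact Ec |]; exists phi; split; [| exact Hbar].
  exact (hat_subset D' D HD HD' phi Hphi).
Qed.

Lemma admissible_union (S S' : Form -> Prop) (E E' : argument Form -> Prop) :
  atom_disjoint atm S S' ->
  admissible derives bar hat S E -> admissible derives bar hat S' E' ->
  admissible derives bar hat (union S S') (union E E').
Proof.
  intros Hdisj HE HE'.
  pose proof (atom_disjoint_sym atm S S' Hdisj) as Hdisj'.
  pose proof HE as [HEarg [HEcf _]]; pose proof HE' as [HE'arg [HE'cf _]].
  split; [| split].
  - intros a [Ea | Ea]; eapply in_Arg_subset; eauto; intros x Hx; red; auto.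
  - intros a b [Ea | Ea] [Eb | Eb]; auto.
    + exact (admissible_not_attacked_across S S' E' a b Hdisj HE' (HEarg a Ea) Eb).
    + exact (admissible_not_attacked_across S' S E a b Hdisj' HE (HE'arg a Ea) Eb).
  - intros a [Ea | Ea] b Hb Hat.
    + destruct (admissible_defends_in_union S S' E a Hdisj HE Ea b Hb Hat)
        as [c [Ec Hc]].
      exists c; split; [left |]; auto.
    + rewrite union_comm in Hb.
      destruct (admissible_defends_in_union S' S E' a Hdisj' HE' Ea b Hb Hat)
        as [c [Ec Hc]].
      exists c; split; [right |]; auto.
Qed.

End PreRelevantSetting.

Theorem lemma3 (Form Atom : Type) (atm : Form -> Atom -> Prop)
  (derives : (Form -> Prop) -> Form -> Prop)
  (bar : Form -> (Form -> Prop))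
  (hat : (Form -> Prop) -> (Form -> Prop))
  (Hset : is_setting hat)
  (Hrel : pre_relevance atm derives bar hat)
  (S S' : Form -> Prop)
  (Hdisj : atom_disjoint atm S S')
  (E E' : argument Form -> Prop)
  (HE : complete derives bar hat S E)
  (HE' : complete derives bar hat S' E') :
  admissible derives bar hat (union S S') (union E E').
Proof.
  exact (admissible_union Form Atom atm derives bar hat Hset Hrel S S' E E' Hdisj
           (proj1 HE) (proj1 HE')).
Qed.
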